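(* Let $d$ be a positive integer and suppose that there is a function $\varepsilon:\mathbb{N}\to\mathbb{R}$ with $\varepsilon(N)\to0$ such that for every $d$--regular bipartite graph $G$ on $2n$ vertices and every $0\leq k\leq n$ one has $\frac{\ln m_k(G)}{v(G)}\geq\mathcal{G}_d(k/n)-\varepsilon(v(G))$. Then for every $d$--regular bipartite graph $G$ on $v(G)=2n$ vertices and every integer $0\leq k\leq n$, $$\frac{\ln m_k(G)}{v(G)}\geq\mathcal{G}_d(p)-\frac{\ln v(G)}{v(G)},\qquad p=\frac kn.$$
   Context: $m_k(G)$ is the number of matchings of size $k$ in $G$. $\mathcal{G}_d(p)=\frac{1}{2}\left(p\ln\frac{d}{p}+(d-p)\ln\left(1-\frac{p}{d}\right)-2(1-p)\ln(1-p)\right)$ for $0\leq p\leq1$, with $0\ln(\cdot)=0$. *)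

From mathcomp Require Import all_boot.
From Stdlib Require Import Reals.

Set Implicit Arguments.
Unset Strict Implicit.
Unset Printing Implicit Defensive.

Definition simple_graph (T : finType) (e : rel T) : Prop :=
  (forall x y, e x y = e y x) /\ (forall x, e x x = false).

Definition regular (T : finType) (e : rel T) (d : nat) : Prop :=
  forall x : T, #|[set y | e x y]| = d.

Definition bipartite (T : finType) (e : rel T) : Prop :=
  exists A : {set T}, forall x y, e x y -> (x \in A) != (y \in A).

Definition edges (T : finType) (e : rel T) : {set {set T}} :=
  [set [set xy.1; xy.2] | xy in [set xy : T * T | e xy.1 xy.2]].

Definition is_matching (T : finType) (e : rel T) (M : {set {set T}}) : bool :=
  (M \subset edges e) &&
  [forall A in M, forall B in M, (A != B) ==> [disjoint A & B]].

Definition m_ (T : finType) (e : rel T) (k : nat) : nat :=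
  #|[set M : {set {set T}} | is_matching e M & #|M| == k]|.

Open Scope R_scope.

(* a * ln b with the convention 0 * ln(.) = 0 *)
Definition xln (a b : R) : R := if Req_EM_T a 0 then 0 else a * ln b.

Definition Gd (d : nat) (p : R) : R :=
  / 2 * (xln p (INR d / p) + xln (INR d - p) (1 - p / INR d)
         - 2 * xln (1 - p) (1 - p)).

From Stdlib Require Import Reals Lra.
From mathcomp Require Import all_boot all_order all_algebra zify.
Set Implicit Arguments. Unset Strict Implicit. Unset Printing Implicit Defensive.
Import Order.TTheory GRing.Theory Num.Theory.

(* The hypothesis applies to the disjoint union [sG] of [s] copies of [G],
   which has [2sn] vertices. A matching of size [sk] in [sG] splits into
   matchings of [G] of sizes [c_1 + ... + c_s = sk] with every [c_i <= n], so
   [m_sk(sG) <= (n+1)^s * max prod_i m_(c_i)(G) <= (n+1)^s * m_k(G)^s], the last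
   step by log-concavity of [j |-> m_j(G)]. As [G_d(sk/sn) = G_d(k/n)], this
   gives [ln m_k(G) / 2n >= G_d(k/n) - ln(n+1) / 2n - eps(2sn)] for every [s];
   letting [s] tend to infinity and using [n + 1 <= 2n] proves the bound. *)

Local Open Scope nat_scope.

Lemma pair_inj (A B : Type) (a : A) : injective (pair a : B -> A * B).
Proof. by move=> x y [->]. Qed.

Lemma connect_exit (U : finType) (r : rel U) (Y : {set U}) x y :
  connect r x y -> x \in Y -> y \notin Y ->
  exists u v, [/\ u \in Y, v \notin Y & r u v].
Proof.
move/connectP=> [p pth ->]; elim: p x pth => [|z p IH] x /=; first by move=> _ ->.
case/andP=> rxz pth xY lY; case: (boolP (z \in Y)) => zY; first exact: IH pth zY lY.
by exists x, z.
Qed.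

Lemma sum_mem_card (U : finType) (P Q : {set U}) :
  \sum_(x in P) (x \in Q) = #|P :&: Q|.
Proof.
rewrite -sum1_card big_mkcond [RHS]big_mkcond; apply: eq_bigr => x _.
by rewrite inE; case: (x \in P); case: (x \in Q).
Qed.

Lemma cover_setU1 (U : finType) (E : {set U}) (P : {set {set U}}) :
  cover (E |: P) = E :|: cover P.
Proof. by rewrite /cover bigcup_setU big_set1. Qed.

Definition symdiff (U : finType) (A B : {set U}) := (A :\: B) :|: (B :\: A).

Lemma symdiffC (U : finType) (A B : {set U}) : symdiff A B = symdiff B A.
Proof. exact: setUC. Qed.

Section Matchings.
Variables (T : finType) (e : rel T).
Hypothesis e_irr : forall x, e x x = false.
Implicit Types (A B M N : {set {set T}}) (E F : {set T}).

Definition matchings j := [set M | is_matching e M & #|M| == j].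

Lemma card_edge E : E \in edges e -> #|E| = 2.
Proof.
case/imsetP=> xy; rewrite inE => exy ->; rewrite cards2.
by have -> : xy.1 != xy.2 by apply: contraTneq exy => ->; rewrite e_irr.
Qed.

Lemma matchingP M : reflect
  (M \subset edges e /\ {in M &, forall E F, E != F -> [disjoint E & F]})
  (is_matching e M).
Proof.
apply: (iffP andP) => -[sub H]; split=> //.
  by move=> E F EM FM; move/forall_inP: H => /(_ E EM)/forall_inP/(_ F FM)/implyP.
by apply/forall_inP=> E EM; apply/forall_inP=> F FM; apply/implyP; apply: H.
Qed.

Lemma matching_eq M E F x : is_matching e M -> E \in M -> F \in M ->
  x \in E -> x \in F -> E = F.
Proof.
case/matchingP=> _ H EM FM xE xF; apply/eqP/negPn/negP => nEF.
by rewrite (disjointFr (H E F EM FM nEF) xE) in xF.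
Qed.

Lemma matching_sub M N : is_matching e M -> N \subset M -> is_matching e N.
Proof.
case/matchingP=> sub H NM; apply/matchingP; split; first exact: subset_trans NM sub.
by move=> E F EN FN; apply: H; apply: (subsetP NM).
Qed.

Lemma card_cover_matching M : is_matching e M -> #|cover M| = 2 * #|M|.
Proof.
case/matchingP=> sub H; have /eqP <- : trivIset M by apply/trivIsetP.
rewrite mulnC -sum_nat_const; apply: eq_bigr => E EM.
exact/card_edge/(subsetP sub).
Qed.

Lemma card_matching_le n M : #|T| = 2 * n -> is_matching e M -> #|M| <= n.
Proof.
move=> cT /card_cover_matching; have := max_card (cover M); rewrite cT; lia.
Qed.

Lemma m_pred_gt0 j : 0 < m_ e j.+1 -> 0 < m_ e j.
Proof.
rewrite /m_ !card_gt0 => /set0Pn [M]; rewrite inE => /andP[mM /eqP cM].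
have /set0Pn [E EM] : M != set0 by rewrite -card_gt0 cM.
apply/set0Pn; exists (M :\ E); rewrite inE (matching_sub mM (subsetDl _ _)) /=.
by move: (cardsD1 E M); rewrite EM cM add1n => -[->].
Qed.

End Matchings.

Section Components.
Variable T : finType.
Implicit Types (S X : {set {set T}}) (E F : {set T}).

Definition meets S : rel {set T} :=
  fun E F => [&& E \in S, F \in S & ~~ [disjoint E & F]].

Definition components S := equivalence_partition (connect (meets S)) S.

Lemma meets_sym S : symmetric (meets S).
Proof. by move=> E F; rewrite /meets disjoint_sym andbA [(E \in S) && _]andbC -andbA. Qed.

Lemma components_partition S : partition (components S) S.
Proof.
apply: equivalence_partitionP => x y z _ _ _; split; first exact: connect0.
by move=> cxy; apply: (same_connect (sym_connect_sym (@meets_sym S)) cxy).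
Qed.

Lemma componentP S X : X \in components S ->
  exists2 E, E \in S & X = [set F in S | connect (meets S) E F].
Proof. by case/imsetP=> E ES ->; exists E. Qed.

Lemma component_sub S X : X \in components S -> X \subset S.
Proof. by case/componentP=> E ES ->; apply/subsetP=> F; rewrite inE => /andP[]. Qed.

Lemma component_closed S X E F : X \in components S -> E \in X -> F \in S ->
  ~~ [disjoint E & F] -> F \in X.
Proof.
case/componentP=> E0 E0S ->; rewrite !inE => /andP[ES cE] FS dEF.
by rewrite FS; apply: connect_trans cE (connect1 _); rewrite /meets ES FS.
Qed.

End Components.

Lemma odd_add_adjacent a b : b <= a.+1 -> a <= b.+1 ->
  odd (a + b) = (a == b.+1) || (b == a.+1).
Proof.
move=> ba ab; have [->|[->|->]] : b = a \/ b = a.+1 \/ a = b.+1 by lia.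
- by rewrite addnn odd_double; apply/esym/norP; split; apply/eqP; lia.
- by rewrite eqxx orbT addnS /= addnn odd_double.
- by rewrite eqxx addSn addnn /= odd_double.
Qed.

Lemma add_eqS_adjacent a b : b <= a.+1 -> a <= b.+1 ->
  a + (b == a.+1) = b + (a == b.+1).
Proof. by move=> ba ab; case: eqP; case: eqP; lia. Qed.

Section SymdiffComponents.
Variables (T : finType) (e : rel T).
Hypothesis e_irr : forall x, e x x = false.
Implicit Types (A B X Y : {set {set T}}) (E F : {set T}).

(* The edges of a connected [Y] inside [symdiff A B] alternate between [A] and
   [B], so there are at most one more of them than vertices covered on both sides. *)
Definition shared_cover_bound A B Y :=
  #|Y| <= #|cover (A :&: Y) :&: cover (B :&: Y)| + 1.

Lemma shared_cover_boundC A B Y : shared_cover_bound A B Y = shared_cover_bound B A Y.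
Proof. by rewrite /shared_cover_bound setIC. Qed.

(* An edge [F] of [B] meeting an edge [E] of [A :&: Y] at [w] makes [w] shared:
   [w] was not covered by [B :&: Y] since [F] is the only edge of [B] at [w]. *)
Lemma shared_cover_bound_add A B Y F E :
  is_matching e A -> is_matching e B ->
  Y \subset symdiff A B -> F \in B :\: A -> F \notin Y -> E \in Y ->
  ~~ [disjoint F & E] -> shared_cover_bound A B Y -> shared_cover_bound A B (F |: Y).
Proof.
move=> mA mB YS /setDP[FB FA] FY EY /pred0Pn[w /andP[/= wF wE]].
rewrite /shared_cover_bound.
have -> : A :&: (F |: Y) = A :&: Y.
  by apply/setP=> G; rewrite !inE; case: eqP => // ->; rewrite (negbTE FA).
have -> : B :&: (F |: Y) = F |: (B :&: Y).
  by apply/setP=> G; rewrite !inE; case: eqP => // ->; rewrite FB.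
rewrite cover_setU1 cardsU1 FY add1n.
set VA := cover (A :&: Y); set VB := cover (B :&: Y).
suff : #|VA :&: VB| < #|VA :&: (F :|: VB)| by lia.
apply/proper_card/properP; split; first exact/setIS/subsetUr.
have EB : E \notin B.
  apply: contraNN FY => EB; suff -> : F = E by [].
  exact: (matching_eq mB FB EB wF wE).
have EA : E \in A by move: (subsetP YS E EY); rewrite !inE (negbTE EB); case: (E \in A).
exists w; first by rewrite !inE wF andbT; apply/bigcupP; exists E; rewrite // inE EA.
rewrite !inE negb_and; apply/orP; right; apply/bigcupP=> -[G].
rewrite inE => /andP[GB GY] wG.
by move: FY; rewrite (matching_eq mB FB GB wF wG) GY.
Qed.

Lemma component_shared_cover_bound A B X :
  is_matching e A -> is_matching e B ->
  X \in components (symdiff A B) -> shared_cover_bound A B X.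
Proof.
move=> mA mB XC; have [E0 E0S defX] := componentP XC.
have XS := component_sub XC.
have E0X : E0 \in X by rewrite defX inE E0S connect0.
suff grow m Y : #|X :\: Y| <= m -> E0 \in Y -> Y \subset X ->
    shared_cover_bound A B Y -> shared_cover_bound A B X.
  apply: (grow #|X| [set E0]); rewrite ?set11 ?sub1set //.
    exact/subset_leq_card/subsetDl.
  by rewrite /shared_cover_bound cards1 leq_addl.
elim: m Y => [|m IH] Y.
  rewrite leqn0 cards_eq0 setD_eq0 => XY _ YX.
  by have -> : Y = X by apply/eqP; rewrite eqEsubset YX XY.
move=> cardm E0Y YX IY.
have [XY|/subsetPn[G GX GY]] := boolP (X \subset Y).
  by have -> : X = Y by apply/eqP; rewrite eqEsubset YX XY.
have cG : connect (meets (symdiff A B)) E0 G by move: GX; rewrite defX inE => /andP[].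
have [E [F [EY FY mEF]]] := connect_exit cG E0Y GY.
have /and3P[ES FS dEF] := mEF.
have FX : F \in X.
  rewrite defX inE FS /=; apply: connect_trans (connect1 mEF).
  by move: (subsetP YX E EY); rewrite defX inE => /andP[].
apply: (IH (F |: Y)).
- rewrite -ltnS; apply: leq_trans cardm; apply/proper_card/properP.
  by split; [exact/setDS/subsetUr | exists F; rewrite !inE ?FX ?eqxx // FY].
- by rewrite !inE E0Y orbT.
- by rewrite subUset sub1set FX YX.
have YS : Y \subset symdiff A B := subset_trans YX XS.
rewrite disjoint_sym in dEF.
move: FS; rewrite inE => /orP[FAB|FBA].
  rewrite shared_cover_boundC; apply: (shared_cover_bound_add mB mA) dEF _ => //.
    by rewrite symdiffC.
  by rewrite shared_cover_boundC.
exact: (shared_cover_bound_add mA mB YS FBA FY EY dEF IY).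
Qed.

(* [cover (A :&: X)] has [2 * #|A :&: X|] vertices, so [#|X| <= 2 * min + 1]. *)
Lemma component_balanced A B X :
  is_matching e A -> is_matching e B -> X \in components (symdiff A B) ->
  [/\ #|B :&: X| <= #|A :&: X|.+1, #|A :&: X| <= #|B :&: X|.+1
    & #|X| = #|A :&: X| + #|B :&: X|].
Proof.
move=> mA mB XC; have bound := component_shared_cover_bound mA mB XC.
have XS := component_sub XC.
have cardX : #|X| = #|A :&: X| + #|B :&: X|.
  rewrite -cardsUI.
  have -> : (A :&: X) :&: (B :&: X) = set0.
    apply/setP=> E; rewrite !inE; have := subsetP XS E; rewrite !inE.
    by case: (E \in A); case: (E \in B); case: (E \in X) => //= ->.
  have -> : (A :&: X) :|: (B :&: X) = X.
    apply/setP=> E; rewrite !inE; have := subsetP XS E; rewrite !inE.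
    by case: (E \in A); case: (E \in B); case: (E \in X) => //= ->.
  by rewrite cards0 addn0.
have cA := card_cover_matching e_irr (matching_sub mA (subsetIl A X)).
have cB := card_cover_matching e_irr (matching_sub mB (subsetIl B X)).
have l1 := subset_leq_card (subsetIl (cover (A :&: X)) (cover (B :&: X))).
have l2 := subset_leq_card (subsetIr (cover (A :&: X)) (cover (B :&: X))).
move: bound; rewrite /shared_cover_bound; split=> //; lia.
Qed.

Definition surplus A B : {set {set {set T}}} :=
  components (symdiff A B) :&: [set X : {set {set T}} | #|A :&: X| == #|B :&: X|.+1].

Definition odd_components (S : {set {set T}}) :=
  #|components S :&: [set X : {set {set T}} | odd #|X|]|.

Lemma card_surplus_odd A B : is_matching e A -> is_matching e B ->
  #|surplus A B| + #|surplus B A| = odd_components (symdiff A B).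
Proof.
move=> mA mB; rewrite -cardsUI.
have -> : surplus A B :&: surplus B A = set0.
  apply/setP=> X; rewrite !inE; apply/negbTE/negP.
  by case/andP=> /andP[_ /eqP h1] /andP[_ /eqP h2]; lia.
rewrite cards0 addn0; apply: eq_card => X; rewrite !inE [symdiff B A]symdiffC.
case XC: (X \in components _) => //=.
by have [h1 h2 ->] := component_balanced mA mB XC; rewrite odd_add_adjacent.
Qed.

Lemma card_surplus_diff A B : is_matching e A -> is_matching e B ->
  #|A :\: B| + #|surplus B A| = #|B :\: A| + #|surplus A B|.
Proof.
move=> mA mB; have part := components_partition (symdiff A B).
have card_part C : #|symdiff A B :&: C| =
    \sum_(X in components (symdiff A B)) #|C :&: X|.
  rewrite -sum_mem_card (set_partition_big _ part); apply: eq_bigr => X _.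
  by rewrite sum_mem_card setIC.
have -> : A :\: B = symdiff A B :&: A.
  by apply/setP=> E; rewrite !inE; case: (E \in A); case: (E \in B).
have -> : B :\: A = symdiff A B :&: B.
  by apply/setP=> E; rewrite !inE; case: (E \in A); case: (E \in B).
rewrite /surplus [symdiff B A]symdiffC !card_part -!sum_mem_card -!big_split /=.
apply: eq_bigr => X XC; rewrite !inE.
by have [h1 h2 _] := component_balanced mA mB XC; rewrite add_eqS_adjacent.
Qed.

Definition switch (t : {set {set T}} * {set {set T}} * {set {set T}}) :=
  let: (A, B, X) := t in ((A :\: X) :|: (B :&: X), (B :\: X) :|: (A :&: X), X).

Lemma switchK : involutive switch.
Proof.
case=> [[A B] X] /=; congr (_, _, _); apply/setP=> E; rewrite !inE;
by case: (E \in A); case: (E \in B); case: (E \in X).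
Qed.

Lemma symdiff_switch A B X : X \subset symdiff A B ->
  symdiff ((A :\: X) :|: (B :&: X)) ((B :\: X) :|: (A :&: X)) = symdiff A B.
Proof.
move=> XS; apply/setP=> E; have := subsetP XS E; rewrite !inE.
by case: (E \in A); case: (E \in B); case: (E \in X) => //= ->.
Qed.

Lemma switch_setI A B X : ((A :\: X) :|: (B :&: X)) :&: X = B :&: X.
Proof.
by apply/setP=> E; rewrite !inE; case: (E \in A); case: (E \in B); case: (E \in X).
Qed.

Lemma card_switch A B X :
  #|(A :\: X) :|: (B :&: X)| + #|A :&: X| = #|A| + #|B :&: X|.
Proof.
have := cardsUI (A :\: X) (B :&: X).
have -> : (A :\: X) :&: (B :&: X) = set0.
  by apply/setP=> E; rewrite !inE; case: (E \in A); case: (E \in B); case: (E \in X).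
rewrite cards0 addn0 => ->; have := cardsID X A; rewrite setIC; lia.
Qed.

Lemma matching_switch A B X : is_matching e A -> is_matching e B ->
  X \in components (symdiff A B) -> is_matching e ((A :\: X) :|: (B :&: X)).
Proof.
move=> mA mB XC; have /matchingP[sA dA] := mA; have /matchingP[sB dB] := mB.
have cross E F : E \in A :\: X -> F \in B :&: X -> [disjoint E & F].
  rewrite !inE => /andP[EX EA] /andP[FB FX]; apply/negPn/negP => dEF.
  have [EB|EB] := boolP (E \in B).
    have /pred0Pn[w /andP[/= wE wF]] := dEF.
    by move: EX; rewrite (matching_eq mB EB FB wE wF) FX.
  have ES : E \in symdiff A B by rewrite !inE EA EB.
  by move: EX; rewrite (component_closed XC FX ES) // disjoint_sym.
apply/matchingP; split.
  by apply/subsetP=> E; rewrite !inE => /orP[/andP[_ /(subsetP sA)]|/andP[/(subsetP sB)]].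
move=> E F; rewrite !in_setU => /orP[EA|EB] /orP[FA|FB].
- by apply: dA; [move: EA | move: FA]; rewrite inE => /andP[].
- by move=> _; apply: cross.
- by move=> _; rewrite disjoint_sym; apply: cross.
- by apply: dB; [move: EB | move: FB]; rewrite inE => /andP[].
Qed.

Lemma switch_spec A B X : is_matching e A -> is_matching e B ->
  X \in components (symdiff A B) ->
  let A' := (A :\: X) :|: (B :&: X) in let B' := (B :\: X) :|: (A :&: X) in
  [/\ is_matching e A', is_matching e B',
      X \in components (symdiff A' B'),
      #|A'| + #|A :&: X| = #|A| + #|B :&: X| &
      #|B'| + #|B :&: X| = #|B| + #|A :&: X|].
Proof.
move=> mA mB XC; have XS := component_sub XC.
have XC' : X \in components (symdiff B A) by rewrite symdiffC.
split; [exact: matching_switch | exact: matching_switch | by rewrite symdiff_switch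
       | exact: card_switch | exact: card_switch].
Qed.

Definition up_pairs j := setX (matchings e j) (matchings e j.+2).
Definition level_pairs j := setX (matchings e j.+1) (matchings e j.+1).

Definition up_triple (j : nat) (t : {set {set T}} * {set {set T}} * {set {set T}}) :=
  (t.1 \in up_pairs j) && (t.2 \in surplus t.1.2 t.1.1).

Definition level_triple (j : nat) (t : {set {set T}} * {set {set T}} * {set {set T}}) :=
  (t.1 \in level_pairs j) && (t.2 \in surplus t.1.1 t.1.2).

Lemma switch_up_triple (j : nat) t : up_triple j t -> level_triple j (switch t).
Proof.
case: t => [[A B] X].
rewrite /up_triple /level_triple /up_pairs /level_pairs /surplus !inE /=.
case/andP=> /andP[/andP[mA /eqP cA] /andP[mB /eqP cB]] /andP[XC /eqP cX].
rewrite symdiffC in XC; have := switch_spec mA mB XC.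
case=> -> -> -> c1 c2; rewrite !switch_setI.
rewrite /= cX eqxx andbT; apply/andP; split; apply/eqP.
  by apply: (@addIn #|A :&: X|); rewrite c1 cA cX addnS.
by apply: (@addIn #|B :&: X|); rewrite c2 cB cX addnS.
Qed.

Lemma switch_level_triple (j : nat) t : level_triple j t -> up_triple j (switch t).
Proof.
case: t => [[A B] X].
rewrite /up_triple /level_triple /up_pairs /level_pairs /surplus !inE /=.
case/andP=> /andP[/andP[mA /eqP cA] /andP[mB /eqP cB]] /andP[XC /eqP cX].
have := switch_spec mA mB XC.
case=> -> -> XC' c1 c2; rewrite symdiffC XC' !switch_setI.
rewrite /= cX eqxx andbT; apply/andP; split; apply/eqP.
  by apply: (@addIn #|A :&: X|); rewrite c1 cA cX addnS.
by apply: (@addIn #|B :&: X|); rewrite c2 cB cX !addnS.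
Qed.

Lemma card_surplus_up j A B : A \in matchings e j -> B \in matchings e j.+2 ->
  #|surplus B A| * 2 = (odd_components (symdiff A B)).+2.
Proof.
rewrite !inE => /andP[mA /eqP cA] /andP[mB /eqP cB].
have := card_surplus_odd mA mB; have := card_surplus_diff mA mB.
have := cardsID B A; have := cardsID A B; rewrite [B :&: A]setIC; lia.
Qed.

Lemma card_surplus_level j A B : A \in matchings e j -> B \in matchings e j ->
  #|surplus A B| * 2 = odd_components (symdiff A B).
Proof.
rewrite !inE => /andP[mA /eqP cA] /andP[mB /eqP cB].
have := card_surplus_odd mA mB; have := card_surplus_diff mA mB.
have := cardsID B A; have := cardsID A B; rewrite [B :&: A]setIC; lia.
Qed.

(* Weight each triple [(A, B, X)], [X] a component of [symdiff A B] where [B]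
   has the extra edge, by [1 / (r + 2)], [r] the number of odd components. An
   up pair carries [(r + 2) / 2] triples and a level pair [r / 2 <= (r + 2) / 2];
   switching [X] exchanges the two kinds of triples and preserves [r]. *)
Local Open Scope ring_scope.
Lemma card_up_pairs_le j : (#|up_pairs j|%:R : rat) <= #|level_pairs j|%:R.
Proof.
pose w (p : {set {set T}} * {set {set T}}) : rat :=
  ((odd_components (symdiff p.1 p.2)).+2%:R)^-1.
have up_sum : (#|up_pairs j|%:R : rat) = 2 * \sum_(t | up_triple j t) w t.1.
  rewrite -(pair_big_dep (fun p => p \in up_pairs j)
    (fun p X => X \in surplus p.2 p.1) (fun p _ => w p)) /=.
  rewrite mulr_sumr -sumr_const; apply: eq_bigr => -[A B] /setXP[Aj Bj].
  rewrite /= sumr_const -(mulr_natr (w _)) mulrCA -natrM mulnC (card_surplus_up Aj Bj).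
  by rewrite /w mulVf // pnatr_eq0.
have level_sum : \sum_(t | level_triple j t) w t.1 =
    \sum_(p in level_pairs j) #|surplus p.1 p.2|%:R * w p.
  rewrite -(pair_big_dep (fun p => p \in level_pairs j)
    (fun p X => X \in surplus p.1 p.2) (fun p _ => w p)) /=.
  by apply: eq_bigr => p _; rewrite sumr_const mulr_natl.
have switch_sum : \sum_(t | up_triple j t) w t.1 = \sum_(t | level_triple j t) w t.1.
  rewrite [RHS](reindex_inj (can_inj switchK)); apply: eq_big => [t|t].
    apply/idP/idP; first exact: switch_up_triple.
    by move/switch_level_triple; rewrite switchK.
  case: t => [[A B] X]; rewrite /up_triple /surplus !inE /= => /andP[_ /andP[XC _]].
  by rewrite /w /= symdiff_switch // symdiffC (component_sub XC).
rewrite up_sum switch_sum level_sum mulr_sumr -sumr_const.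
apply: ler_sum => -[A B] /setXP[Aj Bj].
rewrite mulrA -natrM mulnC (card_surplus_level Aj Bj) /w.
by rewrite ler_pdivrMr ?ltr0n // mul1r ler_nat leqW.
Qed.
Local Close Scope ring_scope.

Lemma m_log_concave j : m_ e j * m_ e j.+2 <= m_ e j.+1 * m_ e j.+1.
Proof. by rewrite -!cardsX -(@ler_nat rat); apply: card_up_pairs_le. Qed.

End SymdiffComponents.

Section LogConcaveProduct.
Variable a : nat -> nat.
Hypothesis a_lc : forall j, a j * a j.+2 <= a j.+1 * a j.+1.
Hypothesis a_gt0_pred : forall j, 0 < a j.+1 -> 0 < a j.

Let a_gt0_le j k : j <= k -> 0 < a k -> 0 < a j.
Proof.
move=> jk; rewrite -(subnKC jk); elim: (k - j) => [|d IH]; first by rewrite addn0.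
by rewrite addnS => /a_gt0_pred.
Qed.

Let a_eq0_ge j k : k <= j -> a k = 0 -> a j = 0.
Proof.
move=> kj ak0; apply/eqP; rewrite -leqn0 leqNgt; apply/negP => /(a_gt0_le kj).
by rewrite ak0.
Qed.

Section Ratio.
Local Open Scope ring_scope.
Variable K : nat.
Let k := K.+1.
Hypothesis ak_gt0 : (0 < a k)%N.
Let aK_gt0 : (0 < a K)%N := a_gt0_pred ak_gt0.
Let rho : rat := (a k)%:R / (a K)%:R.

Let rho_gt0 : 0 < rho.
Proof. by rewrite /rho divr_gt0 // ltr0n. Qed.

Let ratio_up m : (a (k + m).+1)%:R <= rho * (a (k + m))%:R.
Proof.
elim: m => [|m IH].
  rewrite addn0 /rho mulrAC ler_pdivlMr ?ltr0n // -!natrM ler_nat mulnC.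
  exact: a_lc.
case: (posnP (a (k + m).+1)) => [z|p1].
  have z2 : a (k + m.+1).+1 = 0%N by apply: (a_eq0_ge (k := (k + m).+1)) => //; lia.
  have z1 : a (k + m.+1) = 0%N by rewrite addnS.
  by rewrite z1 z2 mulr0.
have p0 : (0 < a (k + m))%N := a_gt0_pred p1.
rewrite -(@ler_pM2l _ (a (k + m))%:R) ?ltr0n //.
apply: le_trans (_ : (a (k + m).+1)%:R * (a (k + m).+1)%:R <= _).
  by rewrite -!natrM ler_nat addnS; apply: a_lc.
by rewrite addnS [X in _ <= X]mulrC -mulrA mulrCA ler_pM2l ?ltr0n.
Qed.

Let ratio_pow_up m : (a (k + m))%:R <= rho ^+ m * (a k)%:R.
Proof.
elim: m => [|m IH]; first by rewrite addn0 expr0 mul1r.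
rewrite addnS exprS -mulrA; apply: le_trans (ratio_up m) _.
by rewrite ler_pM2l.
Qed.

Let ratio_down d i : (i + d.+1)%N = k -> rho * (a i)%:R <= (a i.+1)%:R.
Proof.
elim: d i => [|d IH] i.
  rewrite addn1 => -[->]; rewrite /rho divfK // pnatr_eq0 -lt0n //.
move=> Hi.
have H1 : (i.+1 + d.+1)%N = k by rewrite addSn -addnS.
have := IH _ H1 => IH1.
have p1 : (0 < a i.+1)%N by apply: (a_gt0_le (j := i.+1) (k := k)) => //; lia.
rewrite -(@ler_pM2r _ (a i.+1)%:R) ?ltr0n //.
apply: le_trans (_ : (a i)%:R * (a i.+2)%:R <= _); last first.
  by rewrite -!natrM ler_nat; apply: a_lc.
rewrite -mulrA mulrCA.
by apply: ler_wpM2l; [rewrite ler0n | exact: IH1].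
Qed.

Let ratio_pow_down d : (d <= k)%N -> rho ^+ d * (a (k - d))%:R <= (a k)%:R.
Proof.
elim: d => [|d IH] Hd; first by rewrite subn0 expr0 mul1r.
rewrite exprSr -mulrA; apply: le_trans (IH (ltnW Hd)).
apply: ler_wpM2l; first by rewrite exprn_ge0 // ltW.
have -> : (k - d = (k - d.+1).+1)%N by lia.
by apply: (ratio_down (d := d)); lia.
Qed.

(* The ratios [a (j + 1) / a j] are nonincreasing, so [a j <= a k * rho ^ (j - k)]
   on both sides of [k]. *)
Let ratio_pow_weighted_le j : (a j)%:R * rho ^+ k <= (a k)%:R * rho ^+ j.
Proof.
case: (leqP k j) => [kj|jk].
  rewrite -(subnKC kj) exprD; set m := (j - k)%N.
  rewrite [rho ^+ k * _]mulrC mulrA ler_pM2r ?exprn_gt0 //.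
  by rewrite mulrC; apply: ratio_pow_up.
have := ratio_pow_down (leq_subr j k); rewrite (_ : (k - (k - j))%N = j); last by lia.
move=> H; have -> : rho ^+ k = rho ^+ (k - j) * rho ^+ j by rewrite -exprD subnK // ltnW.
by rewrite mulrA ler_pM2r ?exprn_gt0 // mulrC.
Qed.

Lemma prod_le_pow_gt0 s (c : 'I_s -> nat) : (\sum_(i < s) c i = s * k)%N ->
  (\prod_(i < s) a (c i) <= a k ^ s)%N.
Proof.
move=> Hs; rewrite -(@ler_nat rat) natr_prod natrX.
rewrite -(@ler_pM2r _ (rho ^+ (s * k))) ?exprn_gt0 //.
have E1 : \prod_(i < s) ((a (c i))%:R * rho ^+ k)
    = (\prod_(i < s) (a (c i))%:R) * rho ^+ (s * k).
  by rewrite big_split /= prodr_const card_ord -exprM mulnC.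
have E2 : \prod_(i < s) ((a k)%:R * rho ^+ c i) = (a k)%:R ^+ s * rho ^+ (s * k).
  by rewrite big_split /= prodr_const card_ord prodrXr Hs.
rewrite -E1 -E2; apply: ler_prod => i _; rewrite ratio_pow_weighted_le andbT.
by rewrite mulr_ge0 ?ler0n // exprn_ge0 // ltW.
Qed.

End Ratio.

Lemma prod_log_concave_le s k (c : 'I_s -> nat) : \sum_(i < s) c i = s * k ->
  \prod_(i < s) a (c i) <= a k ^ s.
Proof.
case: k => [|K] Hs.
  have c0 : forall i, c i = 0.
    move=> i; apply/eqP; rewrite -leqn0; move: Hs; rewrite muln0 (bigD1 i) //=.
    lia.
  by rewrite (eq_bigr (fun _ => a 0)) ?prod_nat_const ?card_ord // => i _; rewrite c0.
case: (posnP (a K.+1)) => [z|p]; last exact: prod_le_pow_gt0.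
case: s c Hs => [|s] c Hs; first by rewrite big_ord0.
have [i Hi] : exists i, K.+1 <= c i.
  apply/existsP; apply: contraT; rewrite negb_exists => /forallP small.
  have : \sum_(i < s.+1) c i <= \sum_(i < s.+1) K.
    by apply: leq_sum => i _; rewrite leqNgt small.
  by rewrite Hs sum_nat_const card_ord mulnS; lia.
by rewrite (bigD1 i) //= (a_eq0_ge Hi z) mul0n.
Qed.

End LogConcaveProduct.

Section Copies.
Variables (T : finType) (e : rel T) (s : nat).
Hypothesis e_irr : forall x, e x x = false.
Implicit Types (E F : {set T}) (X : {set 'I_s * T}) (N : {set {set 'I_s * T}}).

Definition copies : rel ('I_s * T) := fun x y => (x.1 == y.1) && e x.2 y.2.

Definition copy_edge (i : 'I_s) E : {set 'I_s * T} := [set (i, x) | x in E].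

Lemma copies_edgeP X : X \in edges copies ->
  exists i E, E \in edges e /\ X = copy_edge i E.
Proof.
case/imsetP=> [[[i x] [j y]]]; rewrite inE /copies /= => /andP[/eqP ij exy] ->.
exists i, [set x; y]; split; first by apply/imsetP; exists (x, y); rewrite ?inE.
by rewrite /copy_edge imsetU1 imset_set1 ij.
Qed.

Lemma copy_edge_inj i j E F : F \in edges e -> copy_edge i E = copy_edge j F ->
  i = j /\ E = F.
Proof.
move=> /(card_edge e_irr) cF eqEF.
have /set0Pn[x xF] : F != set0 by rewrite -card_gt0 cF.
have : (j, x) \in copy_edge i E by rewrite eqEF; apply/imsetP; exists x.
case/imsetP=> y _ [ji _]; subst j; split=> //.
exact: (imset_inj (@pair_inj _ T i) eqEF).
Qed.

Definition slices N : {dffun forall i : 'I_s, {set {set T}}} :=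
  [ffun i => [set E | copy_edge i E \in N]].

Lemma slices_matching N i : is_matching copies N -> is_matching e (slices N i).
Proof.
move=> mN; have /matchingP[sub dN] := mN; apply/matchingP; split.
  apply/subsetP=> E; rewrite ffunE inE => EN.
  have [j [F [Fe eqEF]]] := copies_edgeP (subsetP sub _ EN).
  by have [_ ->] := copy_edge_inj Fe eqEF.
move=> E F; rewrite !ffunE !inE => EN FN nEF.
rewrite -setI_eq0; apply/eqP/setP => x; rewrite !inE; apply/negbTE/negP => /andP[xE xF].
have : copy_edge i E = copy_edge i F.
  by apply: (matching_eq mN EN FN (x := (i, x))); apply/imsetP; exists x.
by move/(imset_inj (@pair_inj _ T i)) => eqEF; rewrite eqEF eqxx in nEF.
Qed.

Lemma slices_inj N N' : N \subset edges copies -> N' \subset edges copies ->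
  slices N = slices N' -> N = N'.
Proof.
suff sub N1 N2 : N1 \subset edges copies -> slices N1 = slices N2 -> N1 \subset N2.
  by move=> sN sN' eqN; apply/eqP; rewrite eqEsubset sub // sub.
move=> sN eqN; apply/subsetP => X XN.
have [i [E [_ defX]]] := copies_edgeP (subsetP sN _ XN); rewrite defX in XN *.
have : E \in slices N1 i by rewrite ffunE inE.
by rewrite eqN ffunE inE.
Qed.

Lemma card_slices N : N \subset edges copies -> #|N| = \sum_i #|slices N i|.
Proof.
move=> sN; pose P := [set p : 'I_s * {set T} | copy_edge p.1 p.2 \in N].
have defN : N = (fun p => copy_edge p.1 p.2) @: P.
  apply/setP=> X; apply/idP/imsetP => [XN|[p]]; last by rewrite inE => pN ->.
  have [i [E [Ee eqE]]] := copies_edgeP (subsetP sN _ XN).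
  by exists (i, E); rewrite // inE /= -eqE.
have card_sum (U : finType) (A : {set U}) : #|A| = \sum_x (x \in A).
  by rewrite -sum1_card big_mkcond; apply: eq_bigr => x _; case: (x \in A).
rewrite {1}defN card_in_imset.
  rewrite card_sum; under [RHS]eq_bigr do rewrite card_sum.
  by rewrite pair_big; apply: eq_bigr => -[i E] _; rewrite !inE ffunE inE.
move=> [i E] [j F]; rewrite !inE /= => iEN jFN eqEF.
have [k [G [Ge eqG]]] := copies_edgeP (subsetP sN _ iEN).
have [-> ->] := copy_edge_inj Ge eqG.
by rewrite eqEF in eqG; have [-> ->] := copy_edge_inj Ge eqG.
Qed.

Definition sliced k := [set f : {dffun forall i : 'I_s, {set {set T}}} |
  [forall i, is_matching e (f i)] & \sum_i #|f i| == s * k].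

Lemma m_copies_le_sliced k : m_ copies (s * k) <= #|sliced k|.
Proof.
rewrite /m_ -(card_in_imset (f := slices)); last first.
  move=> N N'; rewrite !inE => /andP[/matchingP[sN _] _] /andP[/matchingP[sN' _] _].
  exact: slices_inj.
apply/subset_leq_card/subsetP => f /imsetP[N]; rewrite inE => /andP[mN /eqP cN] ->.
have /matchingP[sN _] := mN.
rewrite inE -(card_slices sN) cN eqxx andbT.
by apply/forallP => i; apply: slices_matching.
Qed.

Lemma card_sliced_le n k : (forall M, is_matching e M -> #|M| <= n) ->
  #|sliced k| <= n.+1 ^ s * m_ e k ^ s.
Proof.
move=> bound.
pose profile (f : {dffun forall i : 'I_s, {set {set T}}}) : {ffun 'I_s -> 'I_n.+1} :=
  [ffun i => inord #|f i|].
have profileE f i : f \in sliced k -> profile f i = #|f i| :> nat.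
  by rewrite inE => /andP[/forallP mf _]; rewrite ffunE inordK // ltnS bound.
rewrite -sum1_card (partition_big profile xpredT) //=.
have -> : n.+1 ^ s * m_ e k ^ s = \sum_(c : {ffun 'I_s -> 'I_n.+1}) m_ e k ^ s.
  by rewrite sum_nat_const card_ffun !card_ord.
apply: leq_sum => c _.
rewrite sum1dep_card.
have [->|[f0]] := set_0Vmem [set f in sliced k | profile f == c]; first by rewrite cards0.
rewrite inE => /andP[f0k /eqP f0c].
have sum_c : \sum_i (c i : nat) = s * k.
  move: (f0k); rewrite inE => /andP[_ /eqP <-].
  by apply: eq_bigr => i _; rewrite -f0c profileE.
apply: (@leq_trans #|setXn (fun i : 'I_s => matchings e (c i))|).
  apply/subset_leq_card/subsetP => f; rewrite inE => /andP[fk /eqP <-].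
  apply/setXnP => i; rewrite inE profileE // eqxx andbT.
  by move: fk; rewrite inE => /andP[/forallP].
rewrite cardsXn; apply: prod_log_concave_le sum_c.
  exact: m_log_concave.
exact: m_pred_gt0.
Qed.

End Copies.

Arguments copies {T} e s.

Section CopiesProperties.
Variables (T : finType) (e : rel T) (s : nat).

Lemma copies_simple : simple_graph e -> simple_graph (copies e s).
Proof. by case=> sym irr; split=> [x y|x]; rewrite /copies ?irr ?andbF // eq_sym sym. Qed.

Lemma copies_regular d : regular e d -> regular (copies e s) d.
Proof.
move=> rg x; rewrite -(rg x.2) -(card_imset [set y | e x.2 y] (@pair_inj _ T x.1)).
apply: eq_card => -[i y]; rewrite !inE /copies /=; apply/andP/imsetP.
  by case=> /eqP <- exy; exists y; rewrite ?inE.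
by case=> y'; rewrite inE => ey [-> ->].
Qed.

Lemma copies_bipartite : bipartite e -> bipartite (copies e s).
Proof.
case=> A HA; exists [set x : 'I_s * T | x.2 \in A] => x y; rewrite /copies !inE.
by case/andP=> _ /HA.
Qed.

End CopiesProperties.

Local Open Scope R_scope.

(* Stdlib's [ln] is [0] on nonpositive reals, so [ln (INR m)] is nonnegative
   and monotone on all of [nat], including [m = 0]. *)
Lemma ln_le0 x : x <= 0 -> ln x = 0.
Proof. by move=> x_le0; rewrite /ln; case: Rlt_dec => // ?; exfalso; lra. Qed.

Lemma ln_INR_le a b : (a <= b)%N -> ln (INR a) <= ln (INR b).
Proof.
case: a => [|a] ab.
  rewrite (ln_le0 (x := INR 0)) /=; last lra.
  case: b ab => [_|b _]; first by rewrite ln_le0 /=; lra.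
  rewrite -ln_1; have : 1 <= INR b.+1 by apply: (le_INR 1); apply/ssrnat.leP.
  by case=> [lt1|<-]; [left; apply: ln_increasing; lra | lra].
have a_gt0 : 0 < INR a.+1 by apply: lt_0_INR; apply/ssrnat.ltP.
case: (le_INR _ _ (elimT ssrnat.leP ab)) => [lt|->]; last by right.
by left; apply: ln_increasing.
Qed.

Lemma ln_expn_mul_le p m s : (0 < p)%N ->
  ln (INR (p ^ s * m ^ s)) <= INR s * (ln (INR p) + ln (INR m)).
Proof.
move=> p_gt0; have INRp_gt0 : 0 < INR p by apply: lt_0_INR; apply/ssrnat.ltP.
case: m => [|m].
  have ln0 : ln (INR 0) = 0 by apply: ln_le0; rewrite /=; lra.
  have := ln_INR_le (leq0n p); rewrite ln0 => lnp.
  case: s => [|s]; first by rewrite !expn0 /= ln_1; lra.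
  by rewrite exp0n // muln0 ln0; have := pos_INR s.+1; nra.
have INRm_gt0 : 0 < INR m.+1 by apply: lt_0_INR; apply/ssrnat.ltP.
have INR_expn q : INR (q ^ s) = INR q ^ s.
  by elim: s => [|s' IH]; rewrite ?expn0 // expnS mulnE mult_INR IH.
rewrite mulnE mult_INR !INR_expn ln_mult ?ln_pow; try apply: pow_lt; lra.
Qed.

Lemma ln_m_copies_le (T : finType) (e : rel T) n k s :
  (forall x, e x x = false) -> #|T| = (2 * n)%N ->
  ln (INR (m_ (copies e s) (s * k))) <= INR s * (ln (INR n.+1) + ln (INR (m_ e k))).
Proof.
move=> e_irr cT; apply: Rle_trans (ln_expn_mul_le _ _ (ltn0Sn n)).
apply: ln_INR_le; apply: leq_trans (m_copies_le_sliced s e_irr k) _.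
by apply: card_sliced_le => // M; apply: card_matching_le.
Qed.

Lemma le_of_Un_cv_lower (eps : nat -> R) a b : Un_cv eps 0 ->
  (forall N, exists2 m, (N <= m)%N & a - eps m <= b) -> a <= b.
Proof.
move=> eps0 lower; apply: Rnot_lt_le => ba.
have [N HN] := eps0 (a - b) ltac:(lra).
have [m Nm] := lower N; have := HN m (elimT ssrnat.leP Nm).
rewrite /R_dist Rminus_0_r; have := Rle_abs (eps m); lra.
Qed.

Lemma Gd_0 d : (0 < d)%N -> Gd d 0 = 0.
Proof.
move=> d_gt0; have d_pos : 0 < INR d by apply: lt_0_INR; apply/ssrnat.ltP.
have xln0 b : xln 0 b = 0 by rewrite /xln; case: Req_EM_T.
have xlnE a b : a <> 0 -> xln a b = a * ln b by rewrite /xln; case: Req_EM_T.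
rewrite /Gd xln0 !xlnE; try lra.
by rewrite /Rdiv Rmult_0_l !Rminus_0_r ln_1; lra.
Qed.

Definition matching_lower_bound d (eps : nat -> R) :=
  forall (T : finType) (e : rel T) (n k : nat),
    simple_graph e -> regular e d -> bipartite e ->
    #|T| = (2 * n)%N -> (k <= n)%N ->
    ln (INR (m_ e k)) / INR #|T| >= Gd d (INR k / INR n) - eps #|T|.

Lemma matching_lower_bound_copies d eps (T : finType) (e : rel T) n k s :
  matching_lower_bound d eps ->
  simple_graph e -> regular e d -> bipartite e -> #|T| = (2 * n)%N -> (k <= n)%N ->
  (0 < n)%N -> (0 < s)%N ->
  Gd d (INR k / INR n) - eps (2 * (s * n))%N
    <= (ln (INR n.+1) + ln (INR (m_ e k))) / INR (2 * n).
Proof.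
move=> bound sg rg bp cT kn n_gt0 s_gt0.
have s_pos : 0 < INR s by apply: lt_0_INR; apply/ssrnat.ltP.
have n_pos : 0 < INR n by apply: lt_0_INR; apply/ssrnat.ltP.
have cT' : #|{: 'I_s * T}| = (2 * (s * n))%N by rewrite card_prod card_ord cT mulnCA.
have skn : (s * k <= s * n)%N by rewrite leq_mul2l kn orbT.
have := bound _ (copies e s) _ _ (copies_simple s sg)
  (copies_regular rg) (copies_bipartite s bp) cT' skn.
rewrite cT' !mult_INR Rdiv_mult_l_l; last lra.
move/Rge_le/Rle_trans; apply.
rewrite (_ : _ / (INR 2 * INR n) = INR s * (ln (INR n.+1) + ln (INR (m_ e k)))
    / (INR 2 * (INR s * INR n))); last by field; simpl; lra.
apply: Rmult_le_compat_r; last exact: ln_m_copies_le (proj2 sg) cT.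
by left; apply: Rinv_0_lt_compat; simpl; nra.
Qed.

Theorem corollary3p2 (d : nat) (hd : (0 < d)%nat) :
  (exists eps : nat -> R, Un_cv eps 0 /\
     forall (T : finType) (e : rel T) (n k : nat),
       simple_graph e -> regular e d -> bipartite e ->
       #|T| = (2 * n)%nat -> (k <= n)%nat ->
       ln (INR (m_ e k)) / INR #|T| >= Gd d (INR k / INR n) - eps #|T|) ->
  forall (T : finType) (e : rel T) (n k : nat),
    simple_graph e -> regular e d -> bipartite e ->
    #|T| = (2 * n)%nat -> (k <= n)%nat ->
    ln (INR (m_ e k)) / INR #|T| >= Gd d (INR k / INR n) - ln (INR #|T|) / INR #|T|.
Proof.
move=> [eps [eps0 bound]] T e n k sg rg bp cT kn; rewrite cT; apply: Rle_ge.
(* For [n = 0] both sides vanish, [/ 0] being [0] in Stdlib. *)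
case: n => [|n] in cT kn *.
  rewrite (_ : k = 0%N); last by apply/eqP; rewrite -leqn0.
  by rewrite /Rdiv Rinv_0 !Rmult_0_r Gd_0 //; lra.
have lower : Gd d (INR k / INR n.+1)
    <= (ln (INR n.+2) + ln (INR (m_ e k))) / INR (2 * n.+1).
  apply: (le_of_Un_cv_lower eps0) => N; exists (2 * (N.+1 * n.+1))%N; first by nia.
  exact: matching_lower_bound_copies.
have ln_le : ln (INR n.+2) <= ln (INR (2 * n.+1)) by apply: ln_INR_le; lia.
have V_pos : 0 < / INR (2 * n.+1) by apply/Rinv_0_lt_compat/lt_0_INR/ssrnat.ltP.
move: lower; rewrite /Rdiv Rmult_plus_distr_r.
have := Rmult_le_compat_r _ _ _ (Rlt_le _ _ V_pos) ln_le; lra.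
Qed.
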